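(* Let $P.\phi$ be a DQBF with prefix $P=\forall x_1,\dots,x_n\,\exists y_1(D_1),\dots,y_k(D_k)$ and let $G_{\mathrm{syn}}$ be an admissible group w.r.t. $P$. Then for every $g\in G_{\mathrm{syn}}$ and every $s\in\mathcal S(P)$, $[P.g(\phi)]_s=[P.\phi]_{g(s)}$. In particular, $P.\phi$ is true if and only if $P.g(\phi)$ is true, and $s$ is a model of $P.g(\phi)$ if and only if $g(s)$ is a model of $P.\phi$.
   Context: $X=\{x_1,\dots,x_n\}$, $Y=\{y_1,\dots,y_k\}$ are finite disjoint sets of propositional variables; $\operatorname{BF}(V)$ is the set of propositional formulas over $V\subseteq X\cup Y$; $\mathcal A(V)$ the set of assignments $V\to\{\top,\bot\}$, $[\phi]_\sigma$ the truth value. The prefix has dependency sets $D_j\subseteq X$; $\phi\in\operatorname{BF}(X\cup Y)$. An interpretation is $s=(s_1,\dots,s_k)$ with $s_j:\{\top,\bot\}^{|D_j|}\to\{\top,\bot\}$; $\mathcal S(P)$ is the set of interpretations. For $\sigma\in\mathcal A(X)$, $\sigma_s\in\mathcal A(X\cup Y)$ equals $\sigma$ on $X$ and $\sigma_s(y_j)=s_j$ evaluated at $\sigma$'s values on $D_j$. $[P.\phi]_s=\bigwedge_{\sigma\in\mathcal A(X)}[\phi]_{\sigma_s}$; $P.\phi$ is true if some $s$ gives $\top$, and such $s$ is a model. For $g:\operatorname{BF}(V)\to\operatorname{BF}(V)$ and $\sigma\in\mathcal A(V)$, $g(\sigma)(v)=[g(v)]_\sigma$; $g$ preserves propositional satisfiability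 if $[g(\phi)]_\sigma=[\phi]_{g(\sigma)}$ always. A formula in $\operatorname{BF}(Y)$ depends on $x_i$ if it contains some $y_j$ with $x_i\in D_j$. A bijection $g$ of $\operatorname{BF}(X\cup Y)$ is admissible w.r.t. $P$ if it preserves propositional satisfiability, $g(x_i)\in\operatorname{BF}(X)$, $g(y_j)\in\operatorname{BF}(Y)$, and if $g(y_j)$ depends on $x_i$ then $g^{-1}(x_i)\in\operatorname{BF}(D_j)$. An admissible group is a subgroup of the group of all admissible functions. For admissible $g$ and $\sigma\in\mathcal A(X)$, $g(\sigma)\in\mathcal A(X)$ is $g(\sigma)(x)=[g(x)]_\sigma$. For $g\in G_{\mathrm{syn}}$ and $s\in\mathcal S(P)$, $g(s)\in\mathcal S(P)$ is the (well-defined) interpretation $t$ with $\sigma_t=g(g^{-1}(\sigma)_s)$ for all $\sigma\in\mathcal A(X)$. *)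

From mathcomp Require Import all_boot.
Set Implicit Arguments. Unset Strict Implicit. Unset Printing Implicit Defensive.

Inductive form (V : Type) : Type :=
  | fVar of V
  | fTrue
  | fFalse
  | fNot of form V
  | fAnd of form V & form V
  | fOr of form V & form V.
Arguments fTrue {V}. Arguments fFalse {V}.

Fixpoint eval (V : Type) (sigma : V -> bool) (f : form V) : bool :=
  match f with
  | fVar v => sigma v
  | fTrue => true
  | fFalse => false
  | fNot f1 => ~~ eval sigma f1
  | fAnd f1 f2 => eval sigma f1 && eval sigma f2
  | fOr f1 f2 => eval sigma f1 || eval sigma f2
  end.

(* all variables occurring in f satisfy p, i.e. f \in BF({v | p v}) *)
Fixpoint form_over (V : Type) (p : V -> bool) (f : form V) : bool :=
  match f with
  | fVar v => p v
  | fTrue | fFalse => true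
  | fNot f1 => form_over p f1
  | fAnd f1 f2 | fOr f1 f2 => form_over p f1 && form_over p f2
  end.

Fixpoint occurs (V : eqType) (v : V) (f : form V) : bool :=
  match f with
  | fVar w => w == v
  | fTrue | fFalse => false
  | fNot f1 => occurs v f1
  | fAnd f1 f2 | fOr f1 f2 => occurs v f1 || occurs v f2
  end.

(* Variables: X = {x_1..x_n} as inl, Y = {y_1..y_k} as inr. *)
Definition var (n k : nat) : Type := ('I_n + 'I_k)%type.
Definition isX (n k : nat) (v : var n k) : bool := if v is inl _ then true else false.
Definition isY (n k : nat) (v : var n k) : bool := if v is inr _ then true else false.
Definition inDX (n k : nat) (Dj : {set 'I_n}) (v : var n k) : bool :=
  if v is inl x then x \in Dj else false.

Definition xv n k (i : 'I_n) : form (var n k) := fVar (inl i).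
Definition yv n k (j : 'I_k) : form (var n k) := fVar (inr j).

Definition asg_act n k (g : form (var n k) -> form (var n k))
  (sigma : var n k -> bool) : var n k -> bool :=
  fun v => eval sigma (g (fVar v)).

Definition preserves_sat n k (g : form (var n k) -> form (var n k)) : Prop :=
  forall (phi : form (var n k)) (sigma : var n k -> bool),
    eval sigma (g phi) = eval (asg_act g sigma) phi.

Definition depends n k (D : 'I_k -> {set 'I_n}) (f : form (var n k)) (i : 'I_n) : Prop :=
  exists l : 'I_k, occurs (inr l : var n k) f /\ i \in D l.

Definition admissible n k (D : 'I_k -> {set 'I_n})
  (g : form (var n k) -> form (var n k)) : Prop :=
  [/\ bijective g,
      preserves_sat g,
      (forall i : 'I_n, form_over (@isX n k) (g (xv k i))),
      (forall j : 'I_k, form_over (@isY n k) (g (yv n j)))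
    & (forall (i : 'I_n) (j : 'I_k), depends D (g (yv n j)) i ->
         (* g^{-1}(x_i) \in BF(D_j) *)
         forall f, g f = xv k i -> form_over (@inDX n k (D j)) f)].

Definition admissible_group n k (D : 'I_k -> {set 'I_n})
  (G : (form (var n k) -> form (var n k)) -> Prop) : Prop :=
  [/\ (forall g, G g -> admissible D g),
      G id,
      (forall g h, G g -> G h -> G (g \o h))
    & (forall g, G g -> exists h, [/\ G h, cancel g h & cancel h g])].

Definition interp n k (D : 'I_k -> {set 'I_n}) : Type :=
  forall j : 'I_k, ({x : 'I_n | x \in D j} -> bool) -> bool.

Definition ext n k (D : 'I_k -> {set 'I_n}) (s : interp D) (sigma : 'I_n -> bool)
  : var n k -> bool :=
  fun v => match v with
           | inl x => sigma x
           | inr j => s j (fun x => sigma (val x))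
           end.

Definition dqbf_val n k (D : 'I_k -> {set 'I_n}) (s : interp D) (phi : form (var n k)) : bool :=
  [forall sigma : {ffun 'I_n -> bool}, eval (ext s sigma) phi].

Definition is_model n k (D : 'I_k -> {set 'I_n}) (s : interp D) (phi : form (var n k)) : Prop :=
  dqbf_val s phi.

Definition dqbf_true n k (D : 'I_k -> {set 'I_n}) (phi : form (var n k)) : Prop :=
  exists s : interp D, dqbf_val s phi.

(* view sigma \in A(X) as an assignment on X \cup Y (Y-values irrelevant for BF(X)) *)
Definition liftX n k (sigma : 'I_n -> bool) : var n k -> bool :=
  fun v => if v is inl x then sigma x else false.

Definition asgX_act n k (g : form (var n k) -> form (var n k)) (sigma : 'I_n -> bool)
  : 'I_n -> bool := fun x => eval (@liftX n k sigma) (g (xv k x)).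

(* extend a : D_j -> bool to an element of A(X) (arbitrarily, false outside D_j) *)
Definition extendD n (Dj : {set 'I_n}) (a : {x : 'I_n | x \in Dj} -> bool) : 'I_n -> bool :=
  fun x => odflt false (omap a (insub x)).

(* g(s): the interpretation t with sigma_t = g(g^{-1}(sigma)_s), i.e.
   t_j(sigma|_{D_j}) = [g(y_j)]_{g^{-1}(sigma)_s}; ginv is g^{-1}. *)
Definition interp_act n k (D : 'I_k -> {set 'I_n})
  (g ginv : form (var n k) -> form (var n k)) (s : interp D) : interp D :=
  fun j a => eval (ext s (asgX_act ginv (extendD a))) (g (yv n j)).

From mathcomp Require Import all_boot.
From Stdlib Require Import FunctionalExtensionality.
Set Implicit Arguments. Unset Strict Implicit. Unset Printing Implicit Defensive.

(* Since g preserves satisfiability, [g(phi)]_(sigma_s) = [phi]_(g(sigma_s)), and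
   the key point is that g(sigma_s) = g(sigma)_(g(s)): on X this is because g(x_i)
   lies in BF(X); on y_j, the formula g(y_j) lies in BF(Y), so it only reads the
   values s_l(sigma|D_l) of the y_l occurring in it, and for x_i in such a D_l the
   value sigma(x_i) = [g^-1(x_i)]_(g(sigma)) is determined by g(sigma)|D_j because
   g^-1(x_i) lies in BF(D_j).  As sigma |-> g(sigma) is a bijection of A(X) with
   inverse g^-1, the conjunctions over all sigma defining both sides coincide. *)

Section FormulaEvaluation.
Variable V : eqType.

Lemma eq_eval_occurs (s1 s2 : V -> bool) (f : form V) :
  (forall v, occurs v f -> s1 v = s2 v) -> eval s1 f = eval s2 f.
Proof.
elim: f => //= [v|f IH|f1 IH1 f2 IH2|f1 IH1 f2 IH2] eq_s; first exact: eq_s.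
- by rewrite (IH eq_s).
- by rewrite IH1 ?IH2 // => v occ_v; apply: eq_s; rewrite occ_v ?orbT.
- by rewrite IH1 ?IH2 // => v occ_v; apply: eq_s; rewrite occ_v ?orbT.
Qed.

Lemma occurs_form_over (p : V -> bool) (v : V) (f : form V) :
  form_over p f -> occurs v f -> p v.
Proof.
elim: f => [w|||f IH|f1 IH1 f2 IH2|f1 IH1 f2 IH2] //=.
- by move=> pw /eqP <-.
- by case/andP=> p1 p2 /orP[]; [apply: IH1 | apply: IH2].
- by case/andP=> p1 p2 /orP[]; [apply: IH1 | apply: IH2].
Qed.

Lemma eq_eval_over (p : V -> bool) (s1 s2 : V -> bool) (f : form V) :
  form_over p f -> (forall v, p v -> s1 v = s2 v) -> eval s1 f = eval s2 f.
Proof.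
by move=> f_p eq_s; apply: eq_eval_occurs => v /(occurs_form_over f_p) /eq_s.
Qed.

End FormulaEvaluation.

Section AssignmentsOfX.
Variables n k : nat.
Implicit Types (f : form (var n k)) (tau : 'I_n -> bool).

Lemma eval_liftX (sigma : var n k -> bool) f :
  form_over (@isX n k) f -> eval sigma f = eval (liftX (fun x => sigma (inl x))) f.
Proof. by move/eq_eval_over; apply=> -[]. Qed.

Lemma eval_liftX_extendD (Dj : {set 'I_n}) tau f :
  form_over (@inDX n k Dj) f ->
  eval (liftX (extendD (fun x : {x | x \in Dj} => tau (val x)))) f = eval (liftX tau) f.
Proof. by move/eq_eval_over; apply=> -[x /= x_Dj|//]; rewrite /extendD insubT. Qed.

Lemma asgX_actK (h hinv : form (var n k) -> form (var n k)) :
  preserves_sat hinv -> (forall i, form_over (@isX n k) (h (xv k i))) ->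
  cancel h hinv -> cancel (asgX_act hinv) (asgX_act h).
Proof.
move=> sat_hinv hX hK tau; apply: functional_extensionality => i.
by rewrite /asgX_act -(eval_liftX (asg_act hinv (liftX tau))) // -sat_hinv hK.
Qed.

Lemma dqbf_valP (D : 'I_k -> {set 'I_n}) (s : interp D) f :
  reflect (forall sigma : 'I_n -> bool, eval (ext s sigma) f) (dqbf_val s f).
Proof.
apply: (iffP forallP) => [val_s sigma|val_s sigma]; last exact: val_s.
have <- : fun_of_fin [ffun x => sigma x] = sigma.
  by apply: functional_extensionality => x; rewrite ffunE.
exact: val_s.
Qed.

End AssignmentsOfX.

Section AdmissibleAction.
Variables (n k : nat) (D : 'I_k -> {set 'I_n}).
Variables g ginv : form (var n k) -> form (var n k).
Hypotheses (adm_g : admissible D g) (adm_ginv : admissible D ginv).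
Hypotheses (gK : cancel g ginv) (ginvK : cancel ginv g).

Lemma asg_act_ext (s : interp D) (sigma : 'I_n -> bool) :
  asg_act g (ext s sigma) = ext (interp_act g ginv s) (asgX_act g sigma).
Proof.
case: adm_g => _ _ gX gY g_dep; case: adm_ginv => _ _ ginvX _ _.
apply: functional_extensionality => -[x|j]; first exact: (eval_liftX _ (gX x)).
rewrite /asg_act /interp_act; apply: eq_eval_occurs => v occ_v.
case: v occ_v (occurs_form_over (gY j) occ_v) => // l occ_l _ /=.
congr (s l); apply: functional_extensionality => -[i i_Dl] /=.
have ginv_Dj : form_over (inDX (D j)) (ginv (xv k i)).
  by apply: (g_dep i j) => //; exists l.
have asgX_gK : cancel (asgX_act g) (asgX_act ginv).
  case: adm_g => _ sat_g _ _ _; exact: asgX_actK.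
rewrite -{1}(asgX_gK sigma); symmetry.
exact: (eval_liftX_extendD (asgX_act g sigma) ginv_Dj).
Qed.

Lemma dqbf_val_act (s : interp D) (phi : form (var n k)) :
  dqbf_val s (g phi) = dqbf_val (interp_act g ginv s) phi.
Proof.
case: adm_g => _ sat_g gX _ _; case: adm_ginv => _ sat_ginv _ _ _.
have eval_g sigma : eval (ext s sigma) (g phi)
    = eval (ext (interp_act g ginv s) (asgX_act g sigma)) phi.
  by rewrite sat_g asg_act_ext.
apply/dqbf_valP/dqbf_valP => [val_s tau|val_t sigma]; last by rewrite eval_g.
by rewrite -(asgX_actK sat_ginv gX gK tau) -eval_g.
Qed.

End AdmissibleAction.

Lemma admissible_group_inv n k (D : 'I_k -> {set 'I_n})
    (G : (form (var n k) -> form (var n k)) -> Prop) g ginv :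
  admissible_group D G -> G g -> cancel ginv g -> admissible D ginv.
Proof.
case=> G_adm _ _ G_inv Gg ginvK; have [h [Gh gK_h _]] := G_inv g Gg.
have -> : ginv = h.
  by apply: functional_extensionality => f; rewrite -{2}(ginvK f) gK_h.
exact: G_adm Gh.
Qed.

Theorem proposition1 (n k : nat) (D : 'I_k -> {set 'I_n})
  (G : (form (var n k) -> form (var n k)) -> Prop) :
  admissible_group D G ->
  forall (g ginv : form (var n k) -> form (var n k)),
    G g -> cancel g ginv -> cancel ginv g ->
    forall phi : form (var n k),
      (forall s : interp D, dqbf_val s (g phi) = dqbf_val (interp_act g ginv s) phi)
      /\ (dqbf_true D phi <-> dqbf_true D (g phi))
      /\ (forall s : interp D, is_model s (g phi) <-> is_model (interp_act g ginv s) phi).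
Proof.
move=> adm_G g ginv Gg gK ginvK phi.
have adm_g : admissible D g by case: adm_G => G_adm _ _ _; exact: G_adm.
have adm_ginv := admissible_group_inv adm_G Gg ginvK.
have val_g := dqbf_val_act adm_g adm_ginv gK ginvK.
split=> //; split=> [|s]; last by rewrite /is_model val_g.
split=> -[s val_s].
- exists (interp_act ginv g s).
  by rewrite -(dqbf_val_act adm_ginv adm_g ginvK gK) gK.
- by exists (interp_act g ginv s); rewrite -val_g.
Qed.
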